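(* Let $X,Y$ be complex Banach spaces, $n\in\mathbb N$, let $F:\mathbb R^n\times X\to Y$ be continuous, let $\mathcal B$ be any family of compact subsets of $X$, and let $\mathrm R$ be the collection of all sequences in $\mathbb R^n$. Then $F$ is Bohr $\mathcal B$-almost periodic if and only if $F$ is $(\mathrm R,\mathcal B)$-multi-almost periodic.
   Context: $B(\mathbf t_0,l)$ is the closed Euclidean ball in $\mathbb R^n$. A continuous $F:\mathbb R^n\times X\to Y$ is Bohr $\mathcal B$-almost periodic if for every $B\in\mathcal B$ and $\epsilon>0$ there exists $l>0$ such that for each $\mathbf t_0\in\mathbb R^n$ there exists $\tau\in B(\mathbf t_0,l)$ with $\|F(\mathbf t+\tau;x)-F(\mathbf t;x)\|_Y\le\epsilon$ for all $\mathbf t\in\mathbb R^n$, $x\in B$. It is $(\mathrm R,\mathcal B)$-multi-almost periodic if for every $B\in\mathcal B$ and every sequence $(\mathbf b_k)\in\mathrm R$ there exist a subsequence $(\mathbf b_{k_l})$ and a function $F^\ast:\mathbb R^n\times X\to Y$ with $\lim_{l\to\infty}F(\mathbf t+\mathbf b_{k_l};x)=F^\ast(\mathbf t;x)$ uniformly for $x\in B$, $\mathbf t\in\mathbb R^n$. *)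

From HB Require Import structures.
From mathcomp Require Import all_boot all_order all_algebra.
From mathcomp Require Import all_classical all_reals all_analysis.
From mathcomp.real_closed Require Import complex.
Import Order.TTheory GRing.Theory Num.Theory numFieldNormedType.Exports.

Set Implicit Arguments.
Unset Strict Implicit.
Unset Printing Implicit Defensive.

Local Open Scope ring_scope.
Local Open Scope classical_set_scope.

Definition eucl_norm (R : realType) (n : nat) (v : 'rV[R]_n) : R :=
  Num.sqrt (\sum_(i < n) v ord0 i ^+ 2).

Definition bohr_B_almost_periodic (R : realType) (n : nat)
    (X Y : normedModType R[i]) (BB : set (set X))
    (F : 'rV[R]_n -> X -> Y) : Prop :=
  forall B : set X, BB B ->
  forall eps : R, 0 < eps ->
  exists l : R, 0 < l /\
    forall t0 : 'rV[R]_n, exists tau : 'rV[R]_n,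
      eucl_norm (tau - t0) <= l /\
      forall (t : 'rV[R]_n) (x : X), B x ->
        `|F (t + tau) x - F t x| <= (eps%:C)%C.

Definition multi_almost_periodic (R : realType) (n : nat)
    (X Y : normedModType R[i]) (RR : set (nat -> 'rV[R]_n)) (BB : set (set X))
    (F : 'rV[R]_n -> X -> Y) : Prop :=
  forall B : set X, BB B ->
  forall b : nat -> 'rV[R]_n, RR b ->
  exists (phi : nat -> nat) (Fstar : 'rV[R]_n -> X -> Y),
    (forall k, (phi k < phi k.+1)%N) /\
    forall eps : R, 0 < eps ->
    exists N : nat, forall k : nat, (N <= k)%N ->
      forall (t : 'rV[R]_n) (x : X), B x ->
        `|F (t + b (phi k)) x - Fstar t x| <= (eps%:C)%C.

From HB Require Import structures.
From mathcomp Require Import all_boot all_order all_algebra.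
From mathcomp Require Import all_classical all_reals all_analysis.
From mathcomp.real_closed Require Import complex.
From mathcomp Require Import lra.
Set Implicit Arguments.
Unset Strict Implicit.
Unset Printing Implicit Defensive.

Import Order.TTheory GRing.Theory Num.Theory numFieldNormedType.Exports.
Local Open Scope ring_scope.
Local Open Scope classical_set_scope.

(* If F is Bohr almost periodic on a compact B, an almost period moves any
   point of R^n into a fixed compact ball, so F is uniformly continuous in t,
   uniformly in x in B.  Splitting b_k = a_k + tau_k with tau_k an almost
   period and a_k in that ball, a subsequence along which the a_k cluster has
   pairwise close translates F(. + b_k).  A diagonal extraction over the
   tolerances 1/(m+1) yields translates that are uniformly Cauchy, hence
   uniformly convergent since Y is complete.  Conversely, a uniformly
   convergent subsequence of translates makes b_(phi (N+1)) - b_(phi N) an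
   almost period, and a sequence escaping from ever larger gaps between almost
   periods would have no such difference. *)

Lemma increasing_ltn (f : nat -> nat) :
  (forall k, (f k < f k.+1)%N) -> {homo f : i j / (i < j)%N}.
Proof. by move=> f_incr; apply: homo_ltn f_incr => ? ? ?; exact: ltn_trans. Qed.

Lemma increasing_geq (f : nat -> nat) :
  (forall k, (f k < f k.+1)%N) -> forall k, (k <= f k)%N.
Proof. by move=> f_incr; elim=> [|k IHk] //; exact: leq_ltn_trans IHk (f_incr k). Qed.

Lemma subseq_of_frequently (P : nat -> Prop) :
  (forall N, exists k, (N <= k)%N /\ P k) ->
  exists theta : nat -> nat,
    (forall k, (theta k < theta k.+1)%N) /\ forall k, P (theta k).
Proof.
move=> /choice[g gP].
pose theta := fix theta k := if k is k'.+1 then g (theta k').+1 else g 0%N.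
by exists theta; split => [k|[|k]]; apply: (gP _).1 || apply: (gP _).2.
Qed.

Lemma diagonal_subseq (T : Type) (r : nat -> T -> T -> Prop) :
  (forall m (c : nat -> T), exists theta : nat -> nat,
     (forall k, (theta k < theta k.+1)%N) /\
     forall i j, r m (c (theta i)) (c (theta j))) ->
  forall c : nat -> T, exists phi : nat -> nat,
    (forall k, (phi k < phi k.+1)%N) /\
    forall m i j, (m <= i)%N -> (m <= j)%N -> r m (c (phi i)) (c (phi j)).
Proof.
move=> extract c.
have /choice[th thP] : forall m, exists th : (nat -> T) -> nat -> nat,
    forall c, (forall k, (th c k < th c k.+1)%N) /\
              forall i j, r m (c (th c i)) (c (th c j)).
  by move=> m; have [th thP] := choice (extract m); exists th.
pose Psi := fix Psi m :=
  if m is m'.+1 then Psi m' \o th m (c \o Psi m') else th 0%N c.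
have Psi_incr m k : (Psi m k < Psi m k.+1)%N.
  elim: m k => [|m IHm] k /=; first exact: (thP _ _).1.
  exact: increasing_ltn IHm _ _ ((thP _ _).1 k).
have Psi_rel m i j : r m (c (Psi m i)) (c (Psi m j)).
  by case: m => [|m]; [exact: (thP 0%N c).2 | exact: (thP m.+1 (c \o Psi m)).2].
have Psi_nested m d i : exists j, Psi (d + m)%N i = Psi m j.
  by elim: d i => [|d IHd] i; [exists i | exact: IHd].
exists (fun k => Psi k k); split => [k|m i j mi mj] /=.
  exact: increasing_ltn (Psi_incr k) _ _ (increasing_geq (thP k.+1 (c \o Psi k)).1 k.+1).
have [i' Ei] := Psi_nested m (i - m)%N i; have [j' Ej] := Psi_nested m (j - m)%N j.
by rewrite subnK // in Ei; rewrite subnK // in Ej; rewrite Ei Ej.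
Qed.

Lemma ler_dist3 (K : numDomainType) (V : normedZmodType K) (a b c d : V)
    (e1 e2 e3 : K) :
  `|a - b| <= e1 -> `|b - c| <= e2 -> `|c - d| <= e3 -> `|a - d| <= e1 + e2 + e3.
Proof.
move=> ab bc cd; rewrite -addrA; apply: le_trans (ler_distD b a d) _.
by apply: lerD => //; apply: le_trans (ler_distD c b d) _; exact: lerD.
Qed.

Lemma compact_subseq_close (R : numFieldType) (V : normedModType R) (A : set V)
    (a : nat -> V) (d : R) :
  compact A -> (forall k, A (a k)) -> 0 < d ->
  exists theta : nat -> nat, (forall k, (theta k < theta k.+1)%N) /\
    forall i j, `|a (theta i) - a (theta j)| < d.
Proof.
move=> A_compact aA d0.
have [p [_ p_cluster]] : A `&` cluster (a @ \oo) !=set0.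
  by apply: A_compact; exists 0%N => // k _; exact: aA.
have d2 : 0 < d / 2 by rewrite divr_gt0.
have [theta [theta_incr theta_near]] :
    exists theta : nat -> nat, (forall k, (theta k < theta k.+1)%N) /\
      forall k, ball p (d / 2) (a (theta k)).
  apply: (@subseq_of_frequently (fun k => ball p (d / 2) (a k))) => N.
  have tail_a : (a @ \oo) (a @` [set k | (N <= k)%N]) by exists N => // k /= Nk; exists k.
  have [_ [[k Nk <-] pk]] := p_cluster _ _ tail_a (nbhsx_ballx p _ d2).
  by exists k.
have near_p k : `|p - a (theta k)| < d / 2 by have := theta_near k; rewrite -ball_normE.
exists theta; split => // i j; rewrite [d]splitr.
by apply: le_lt_trans (ler_distD p _ _) _; rewrite distrC ltrD.
Qed.

Lemma compact_unif_cont_fst (R K : numFieldType) (V : normedModType R)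
    (X : topologicalType) (Y : normedModType K) (f : V * X -> Y) (A : set (V * X)) :
  continuous f -> compact A -> forall e : K, 0 < e ->
  exists2 d : R, 0 < d & forall q, A q -> forall v : V,
    `|q.1 - v| < d -> `|f q - f (v, q.2)| <= e.
Proof.
move=> f_cont A_compact e e0.
suff cover : \forall d \near (0 : R)^'+, A `<=`
    [set q | forall v, `|q.1 - v| < d -> `|f q - f (v, q.2)| <= e].
  have [d [d0 dA]] := filter_ex (filterI (nbhs_right_gt 0) cover).
  by exists d => // q /dA.
apply: ((compact_near_coveringP A).1 A_compact R (0 : R)^'+) => -[p y] _.
have e2 : 0 < e / 2 by rewrite divr_gt0.
have [[U W] /= [Up Wy] UW] := cvgr_dist_lt _ _ (f_cont (p, y)) _ e2.
have [r r0 rU] := (nbhs_ballP _ _).1 Up.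
have r2 : 0 < r / 2 by rewrite divr_gt0.
exists (ball p (r / 2) `*` W, [set d | d < r / 2]).
  split; last exact: nbhs_right_lt.
  by exists (ball p (r / 2), W) => //; split => //; exact: nbhsx_ballx.
move=> [[q x] d] /= [[pq Wx] dr] v qv.
have pq' : `|p - q| < r / 2 by move: pq; rewrite -ball_normE.
have Uq : U q.
  apply: rU; rewrite -ball_normE /=; apply: lt_le_trans pq' _.
  by rewrite [leRHS]splitr lerDl ltW.
have Uv : U v.
  apply: rU; rewrite -ball_normE /= [r]splitr.
  by apply: le_lt_trans (ler_distD q _ _) _; rewrite ltrD // (lt_trans qv).
rewrite [e]splitr; apply: le_trans (ler_distD (f (p, y)) _ _) _.
by rewrite distrC lerD // ltW //; [exact: (UW (q, x)) | exact: (UW (v, x))].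
Qed.

Lemma uniformly_cauchy_cvg (K : numFieldType) (T : Type)
    (Y : completeNormedModType K) (A : set T) (u : nat -> T -> Y) :
  (forall e, 0 < e -> exists N, forall i j, (N <= i)%N -> (N <= j)%N ->
     forall t, A t -> `|u i t - u j t| <= e) ->
  forall e, 0 < e -> exists N, forall k, (N <= k)%N ->
    forall t, A t -> `|u k t - lim (u ^~ t @ \oo)| <= e.
Proof.
move=> u_cauchy e e0; have e2 : 0 < e / 2 by rewrite divr_gt0.
have [N uN] := u_cauchy _ e2; exists N => k Nk t At.
have u_cvg : u ^~ t @ \oo --> lim (u ^~ t @ \oo).
  apply/cauchy_cvgP/cauchyP => r r0; have r2 : 0 < r / 2 by rewrite divr_gt0.
  have [M uM] := u_cauchy _ r2; exists (u M t); exists M => // i /= Mi.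
  rewrite -ball_normE /=; apply: le_lt_trans (uM _ _ (leqnn M) Mi t At) _.
  by rewrite ltr_pdivrMr // ltr_pMr // ltr1n.
have [k' [Nk' k'_near]] :=
  filter_ex (filterI (nbhs_infty_ge N) (cvgr_dist_lt _ _ u_cvg _ e2)).
rewrite [e]splitr; apply: le_trans (ler_distD (u k' t) _ _) _.
by rewrite lerD ?uN // distrC ltW.
Qed.

Lemma eucl_normN (R : realType) n (v : 'rV[R]_n) : eucl_norm (- v) = eucl_norm v.
Proof.
by rewrite /eucl_norm; congr Num.sqrt; apply: eq_bigr => i _; rewrite mxE sqrrN.
Qed.

Lemma eucl_norm0 (R : realType) n : eucl_norm (0 : 'rV[R]_n) = 0.
Proof. by rewrite /eucl_norm big1 ?sqrtr0 // => i _; rewrite mxE expr0n. Qed.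

Lemma normr_le_eucl_norm (R : realType) n (v : 'rV[R]_n) : `|v| <= eucl_norm v.
Proof.
rewrite -[leLHS]/(mx_norm v) mx_normrE; apply/bigmax_leP; split; first exact: sqrtr_ge0.
move=> [i j] _ /=; rewrite (ord1 i) /eucl_norm -sqrtr_sqr; apply: ler_wsqrtr.
by rewrite (bigD1 j) //= lerDl; apply: sumr_ge0 => k _; exact: sqr_ge0.
Qed.

Lemma compact_normr_le (R : realType) n (l : R) :
  compact [set v : 'rV[R]_n | `|v| <= l].
Proof.
apply: bounded_closed_compact.
  by exists l; split => [|M lM v /= vl]; [exact: num_real | exact: le_trans vl (ltW lM)].
exact: preimage_closed (in1W (@norm_continuous _ 'rV[R]_n)) (closed_le (y := l)).
Qed.

Definition almost_period (R : realType) n (X Y : normedModType R[i])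
    (F : 'rV[R]_n -> X -> Y) (B : set X) (eps : R) (tau : 'rV[R]_n) : Prop :=
  forall t x, B x -> `|F (t + tau) x - F t x| <= (eps%:C)%C.

Definition relatively_dense (R : realType) n (P : set 'rV[R]_n) : Prop :=
  exists l : R, 0 < l /\
    forall t0 : 'rV[R]_n, exists tau, eucl_norm (tau - t0) <= l /\ P tau.

(* If [P] misses the ball of radius [M + 1] around [g (M + 1)], then
   [s_(k+1) := g (M_k + 1)] with [M_k] bounding [|s_0|, ..., |s_k|] has no
   difference [s_j - s_i] (i < j) in [P]. *)
Lemma relatively_dense_of_diff (R : realType) n (P : set 'rV[R]_n) :
  (forall s : nat -> 'rV[R]_n, exists i j, (i < j)%N /\ P (s j - s i)) ->
  relatively_dense P.
Proof.
move=> P_diff; apply: contrapT => P_sparse.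
have /choice[g gP] : forall l : R, exists t0, 0 < l ->
    forall tau, eucl_norm (tau - t0) <= l -> ~ P tau.
  move=> l; have [l0|l_le0] := ltP 0 l; last by exists 0.
  have : ~ forall t0, exists tau, eucl_norm (tau - t0) <= l /\ P tau.
    by move=> dense; apply: P_sparse; exists l.
  by move=> /existsNP[t0 Nt0]; exists t0 => _ tau taul Ptau; apply: Nt0; exists tau.
pose M := fix M k := if k is k'.+1 then Num.max (M k') (eucl_norm (g (M k' + 1))) else 0.
pose s k := if k is k'.+1 then g (M k' + 1) else 0.
have M_ge0 k : 0 <= M k by elim: k => [|k IHk] //=; rewrite le_max IHk.
have M_mono i j : (i <= j)%N -> M i <= M j.
  move=> /subnK <-; elim: (j - i)%N => [|d IHd] //=.
  by rewrite le_max IHd.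
have s_le_M k : eucl_norm (s k) <= M k.
  by case: k => [|k] /=; rewrite ?eucl_norm0 // le_max lexx orbT.
have [i [[|j] [ij Psji]]] := P_diff s; first by [].
apply: (gP (M j + 1) (ltr_wpDl (M_ge0 j) ltr01) _ _ Psji).
rewrite /= addrAC subrr add0r eucl_normN.
apply: le_trans (s_le_M i) _; apply: le_trans (M_mono i j _) _; first by rewrite -ltnS.
by rewrite lerDl.
Qed.

Lemma splitc3 (R : realType) (e : R) :
  (e%:C)%C = ((e / 3)%:C + (e / 3)%:C + (e / 3)%:C)%C.
Proof. by rewrite -!rmorphD /=; congr ((_ %:C)%C); lra. Qed.

Section BohrAlmostPeriodic.
Variables (R : realType) (n : nat) (X Y : normedModType R[i]).
Variables (F : 'rV[R]_n -> X -> Y) (B : set X).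
Hypothesis F_cont : continuous (fun p : 'rV[R]_n * X => F p.1 p.2).
Hypothesis B_compact : compact B.
Hypothesis ap_dense : forall eps, 0 < eps -> relatively_dense (almost_period F B eps).

(* An almost period [tau] moves [s] into the compact ball of radius [l],
   where joint continuity is uniform. *)
Lemma bohr_unif_cont (e : R) : 0 < e -> exists2 d : R, 0 < d &
  forall s s' x, B x -> `|s - s'| < d -> `|F s x - F s' x| <= (e%:C)%C.
Proof.
move=> e0; have e3 : 0 < e / 3 by rewrite divr_gt0.
have [l [l0 l_dense]] := ap_dense e3.
have e3C : 0 < ((e / 3)%:C)%C :> R[i] by rewrite ltcR.
have [d d0 dK] := compact_unif_cont_fst F_cont
  (compact_setX (@compact_normr_le R n l) B_compact) e3C.
exists d => // s s' x Bx ss'.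
have [tau [tau_l tau_ap]] := l_dense (- s).
have s_tau_l : `|s + tau| <= l.
  by apply: le_trans (normr_le_eucl_norm _) _; rewrite addrC -[s]opprK.
have := dK (s + tau, x) (conj s_tau_l Bx) (s' + tau).
rewrite /= opprD addrACA subrr addr0 => /(_ ss') near_tau; rewrite splitc3.
apply: ler_dist3 near_tau _; last exact: tau_ap.
by rewrite distrC; exact: tau_ap.
Qed.

Lemma bohr_close_subseq (e : R) : 0 < e -> forall c : nat -> 'rV[R]_n,
  exists theta : nat -> nat, (forall k, (theta k < theta k.+1)%N) /\
    forall i j t x, B x ->
      `|F (t + c (theta i)) x - F (t + c (theta j)) x| <= (e%:C)%C.
Proof.
move=> e0 c; have e3 : 0 < e / 3 by rewrite divr_gt0.
have [l [l0 l_dense]] := ap_dense e3.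
have [d d0 d_cont] := bohr_unif_cont e3.
have [tau tauP] := choice (fun k => l_dense (c k)).
pose a k := c k - tau k.
have a_l k : `|a k| <= l.
  apply: le_trans (normr_le_eucl_norm _) _.
  by rewrite /a -opprB eucl_normN; exact: (tauP k).1.
have [theta [theta_incr a_close]] :=
  compact_subseq_close (@compact_normr_le R n l) a_l d0.
exists theta; split => // i j t x Bx.
have c_a k : t + c k = (t + a k) + tau k by rewrite addrA subrK.
rewrite !c_a splitc3.
apply: (ler_dist3 (b := F (t + a (theta i)) x) (c := F (t + a (theta j)) x)).
- exact: (tauP _).2.
- by apply: d_cont => //; rewrite opprD addrACA subrr add0r.
- by rewrite distrC; exact: (tauP _).2.
Qed.

End BohrAlmostPeriodic.

Lemma gtc0_real (R : rcfType) (z : R[i]) : 0 < z -> exists2 a : R, 0 < a & z = (a%:C)%C.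
Proof. by case: z => a b; rewrite ltcE /= => /andP[/eqP -> a0]; exists a. Qed.

Lemma bohr_multi_almost_periodic (R : realType) n (X Y : completeNormedModType R[i])
    (F : 'rV[R]_n -> X -> Y) (BB : set (set X)) :
  continuous (fun p : 'rV[R]_n * X => F p.1 p.2) -> (forall B, BB B -> compact B) ->
  bohr_B_almost_periodic BB F -> multi_almost_periodic [set: nat -> 'rV[R]_n] BB F.
Proof.
move=> F_cont BB_compact F_bohr B BB_B b _.
pose close m (a a' : 'rV[R]_n) := forall t x, B x ->
  `|F (t + a) x - F (t + a') x| <= ((m.+1%:R^-1)%:C)%C.
have [phi [phi_incr phi_close]] : exists phi : nat -> nat,
    (forall k, (phi k < phi k.+1)%N) /\
    forall m i j, (m <= i)%N -> (m <= j)%N -> close m (b (phi i)) (b (phi j)).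
  apply: diagonal_subseq => m c.
  exact: bohr_close_subseq F_cont (BB_compact B BB_B) (F_bohr B BB_B) _ _ c.
pose u k (p : 'rV[R]_n * X) := F (p.1 + b (phi k)) p.2.
have u_cauchy (e : R[i]) : 0 < e -> exists N, forall i j, (N <= i)%N -> (N <= j)%N ->
    forall p, B p.2 -> `|u i p - u j p| <= e.
  move=> /gtc0_real[a a0 ->].
  have [N _ /(_ N (leqnn N)) Na] := near_infty_natSinv_lt (PosNum a0).
  exists N => i j Ni Nj [t x] Bx; apply: le_trans (phi_close N i j Ni Nj t x Bx) _.
  by rewrite lecR ltW.
exists phi, (fun t x => lim (u ^~ (t, x) @ \oo)); split => // eps eps0.
have epsC : 0 < (eps%:C)%C :> R[i] by rewrite ltcR.
have [N uN] := uniformly_cauchy_cvg u_cauchy epsC.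
by exists N => k Nk t x Bx; exact: uN k Nk (t, x) Bx.
Qed.

Lemma multi_ap_diff_almost_period (R : realType) n (X Y : normedModType R[i])
    (F : 'rV[R]_n -> X -> Y) (BB : set (set X)) (B : set X) (eps : R) :
  multi_almost_periodic [set: nat -> 'rV[R]_n] BB F -> BB B -> 0 < eps ->
  forall s : nat -> 'rV[R]_n, exists i j, (i < j)%N /\ almost_period F B eps (s j - s i).
Proof.
move=> F_multi BB_B eps0 s.
have [phi [Fs [phi_incr Fs_lim]]] := F_multi B BB_B s I.
have [N FsN] := Fs_lim (eps / 2) (divr_gt0 eps0 (ltr0Sn _ 1)).
exists (phi N), (phi N.+1); split => // t x Bx.
pose u := t - s (phi N).
have -> : t + (s (phi N.+1) - s (phi N)) = u + s (phi N.+1) by rewrite addrA addrAC.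
have -> : F t x = F (u + s (phi N)) x by rewrite subrK.
rewrite [eps]splitr rmorphD; apply: le_trans (ler_distD (Fs u x) _ _) _.
by rewrite lerD ?(FsN _ (leqnSn N) _ _ Bx) // distrC (FsN _ (leqnn N) _ _ Bx).
Qed.

Lemma multi_bohr_almost_periodic (R : realType) n (X Y : normedModType R[i])
    (F : 'rV[R]_n -> X -> Y) (BB : set (set X)) :
  multi_almost_periodic [set: nat -> 'rV[R]_n] BB F -> bohr_B_almost_periodic BB F.
Proof.
move=> F_multi B BB_B eps eps0.
apply: (@relatively_dense_of_diff _ _ (almost_period F B eps)).
exact: multi_ap_diff_almost_period F_multi BB_B eps0.
Qed.

Theorem theorem2p17 (R : realType) (n : nat)
    (X Y : completeNormedModType R[i])
    (F : 'rV[R]_n -> X -> Y) (BB : set (set X)) :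
  continuous (fun p : 'rV[R]_n * X => F p.1 p.2) ->
  (forall B : set X, BB B -> compact B) ->
  (bohr_B_almost_periodic BB F <->
   multi_almost_periodic [set: nat -> 'rV[R]_n] BB F).
Proof.
move=> F_cont BB_compact; split; first exact: bohr_multi_almost_periodic.
exact: multi_bohr_almost_periodic.
Qed.
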